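(* Let $(\eta_t)$ be an irreducible continuous-time Markov chain on a finite set $E$ with jump rates $R(\eta,\xi)$ and invariant probability $\mu$. Let $R^s(\eta,\xi)=\tfrac12\{R(\eta,\xi)+\mu(\xi)R(\xi,\eta)/\mu(\eta)\}$ be the rates of the reversible chain, and denote by $\mathrm{Cap}$ and $\mathrm{Cap}^s$ the capacities with respect to the original and the reversible chain. Then for any two disjoint nonempty subsets $A,B$ of $E$, $$\mathrm{Cap}^s(A,B)\le\mathrm{Cap}(A,B)\le2|E|\,\mathrm{Cap}^s(A,B).$$
   Context: For a chain on $E$ with rates $Q(\eta,\xi)$, holding rates $\lambda(\eta)=\sum_{\xi\ne\eta}Q(\eta,\xi)$ and invariant probability $\mu$, the capacity between disjoint nonempty $A,B$ is $\sum_{\eta\in A}\mu(\eta)\lambda(\eta)\mathbb P_\eta[H_B<H^+_A]$, where $H_B=\inf\{t>0:\eta_t\in B\}$, $H^+_A=\inf\{t>\tau_1:\eta_t\in A\}$ and $\tau_1$ is the first jump time. (The reversible chain with rates $R^s$ has $\mu$ as reversible invariant measure.) *)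

(* the state space E is {0,...,n-1} (so |E| = n); real rates. *)
From Stdlib Require Import Reals List Relations ClassicalEpsilon.
Open Scope R_scope.

Definition rsum (n : nat) (f : nat -> R) : R :=
  fold_right Rplus 0 (map f (seq 0 n)).

Definition hold (n : nat) (Q : nat -> nat -> R) (x : nat) : R :=
  rsum n (fun y => if Nat.eqb y x then 0 else Q x y).

(* transition probabilities of the embedded jump chain: Q(x,y)/lambda(x), y <> x *)
Definition jump (n : nat) (Q : nat -> nat -> R) (x y : nat) : R :=
  if Nat.eqb y x then 0 else Q x y / hold n Q x.

(* hitB K x = P_x[ the jump chain, started at x (time 0 included), hits B
   within K jumps and before hitting A ]  (sum over the corresponding paths) *)
Fixpoint hitB (n : nat) (Q : nat -> nat -> R) (A B : nat -> bool) (K : nat) (x : nat) : R :=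
  match K with
  | O => if B x then 1 else 0
  | S K' => if B x then 1 else if A x then 0
            else rsum n (fun y => jump n Q x y * hitB n Q A B K' y)
  end.

(* P_x[ H_B < H_A^+ and H_B occurs within the first K+1 jumps ]:
   first jump, then hit B before A (time 0 after the jump included). *)
Definition escape_le (n : nat) (Q : nat -> nat -> R) (A B : nat -> bool) (K : nat) (x : nat) : R :=
  rsum n (fun y => jump n Q x y * hitB n Q A B K y).

Definition lim (u : nat -> R) : R :=
  epsilon (inhabits 0) (fun l => Un_cv u l).

(* P_x[ H_B < H_A^+ ] = increasing limit over the number of jumps *)
Definition escape (n : nat) (Q : nat -> nat -> R) (A B : nat -> bool) (x : nat) : R :=
  lim (fun K => escape_le n Q A B K x).

Definition capacity (n : nat) (Q : nat -> nat -> R) (mu : nat -> R) (A B : nat -> bool) : R :=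
  rsum n (fun x => if A x then mu x * hold n Q x * escape n Q A B x else 0).

Definition valid_rates (n : nat) (Q : nat -> nat -> R) : Prop :=
  forall x y, (x < n)%nat -> (y < n)%nat -> x <> y -> 0 <= Q x y.

Definition irreducible (n : nat) (Q : nat -> nat -> R) : Prop :=
  forall x y, (x < n)%nat -> (y < n)%nat ->
    clos_refl_trans nat
      (fun a b => (a < n)%nat /\ (b < n)%nat /\ a <> b /\ 0 < Q a b) x y.

Definition invariant_prob (n : nat) (Q : nat -> nat -> R) (mu : nat -> R) : Prop :=
  (forall x, (x < n)%nat -> 0 <= mu x) /\
  rsum n mu = 1 /\
  (forall y, (y < n)%nat ->
     rsum n (fun x => if Nat.eqb x y then 0 else mu x * Q x y) = mu y * hold n Q y).

Definition sym_rates (Q : nat -> nat -> R) (mu : nat -> R) (x y : nat) : R :=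
  (Q x y + mu y * Q y x / mu x) / 2.

From Stdlib Require Import Reals List Relations ClassicalEpsilon.
From Stdlib Require Import Lra Lia Psatz Sorted Permutation Mergesort Orders.
Open Scope R_scope.

(* For a balanced flow the capacity is the Dirichlet form of the equilibrium potential
   [g = P[H_B < H_A]], and the Dirichlet forms of a chain and of its reversibilization
   coincide; the lower bound is then the Dirichlet principle of the reversible chain
   applied to [g].  For the upper bound, the capacity is at most the flow across the level
   cut [{h < t}] of any [h] equal to 0 on [A] and 1 on [B].  Averaging over the at most [|E|]
   levels of [h = g^s], weighted by the squared gaps between consecutive levels, and
   applying Cauchy-Schwarz to these gaps, bounds it by
   [|E| * sum_(x,y) mu(x) Q(x,y) (h x - h y)^2 = 2 |E| Cap^s(A,B)]. *)

(** * Finite sums *)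

Lemma rsum_S n f : rsum (S n) f = rsum n f + f n.
Proof.
  unfold rsum. rewrite seq_S, map_app, fold_right_app. simpl.
  generalize (map f (seq 0 n)). intros l.
  induction l as [|a l IH]; simpl; [|rewrite IH]; lra.
Qed.

Lemma rsum_ext n f g : (forall x, (x < n)%nat -> f x = g x) -> rsum n f = rsum n g.
Proof.
  induction n; intros H; [reflexivity|].
  rewrite !rsum_S, IHn, H; auto.
Qed.

Lemma rsum_zero n : rsum n (fun _ => 0) = 0.
Proof. induction n; [reflexivity|]. rewrite rsum_S, IHn; lra. Qed.

Lemma rsum_plus n f g : rsum n (fun x => f x + g x) = rsum n f + rsum n g.
Proof. induction n; [unfold rsum; simpl; lra|]. rewrite !rsum_S, IHn; lra. Qed.

Lemma rsum_minus n f g : rsum n (fun x => f x - g x) = rsum n f - rsum n g.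
Proof. induction n; [unfold rsum; simpl; lra|]. rewrite !rsum_S, IHn; lra. Qed.

Lemma rsum_scal n c f : rsum n (fun x => c * f x) = c * rsum n f.
Proof. induction n; [unfold rsum; simpl; lra|]. rewrite !rsum_S, IHn; lra. Qed.

Lemma rsum_le n f g : (forall x, (x < n)%nat -> f x <= g x) -> rsum n f <= rsum n g.
Proof.
  induction n; intros H; [unfold rsum; simpl; lra|]. rewrite !rsum_S.
  apply Rplus_le_compat; auto.
Qed.

Lemma rsum_nonneg n f : (forall x, (x < n)%nat -> 0 <= f x) -> 0 <= rsum n f.
Proof. intros H. rewrite <- (rsum_zero n). apply rsum_le, H. Qed.

Lemma rsum_term_le n f y :
  (forall x, (x < n)%nat -> 0 <= f x) -> (y < n)%nat -> f y <= rsum n f.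
Proof.
  induction n; intros H Hy; [lia|]. rewrite rsum_S.
  destruct (Nat.eq_dec y n) as [->|Hyn].
  - assert (0 <= rsum n f) by (apply rsum_nonneg; auto). lra.
  - assert (f y <= rsum n f) by (apply IHn; [auto|lia]).
    assert (0 <= f n) by auto. lra.
Qed.

Lemma rsum_swap n m (F : nat -> nat -> R) :
  rsum n (fun x => rsum m (F x)) = rsum m (fun y => rsum n (fun x => F x y)).
Proof.
  induction n; simpl.
  - symmetry. apply rsum_zero.
  - rewrite rsum_S, IHn, <- rsum_plus. apply rsum_ext. intros. now rewrite rsum_S.
Qed.

Lemma rsum_cv n (F : nat -> nat -> R) (G : nat -> R) :
  (forall y, (y < n)%nat -> Un_cv (fun K => F K y) (G y)) ->
  Un_cv (fun K => rsum n (F K)) (rsum n G).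
Proof.
  induction n; intros H.
  - intros e He. exists 0%nat. intros. unfold R_dist. simpl. rewrite Rminus_diag, Rabs_R0. lra.
  - rewrite rsum_S. apply (Un_cv_ext (fun K => rsum n (F K) + F K n)).
    + intros. now rewrite rsum_S.
    + apply CV_plus; auto.
Qed.

Lemma lim_eq u l : Un_cv u l -> lim u = l.
Proof.
  intros H. unfold lim. apply (UL_sequence u); [|exact H].
  apply epsilon_spec. now exists l.
Qed.

Lemma cv_const c : Un_cv (fun _ => c) c.
Proof. intros e He. exists 0%nat. intros. unfold R_dist. rewrite Rminus_diag, Rabs_R0. lra. Qed.

Definition dsum n (F : nat -> nat -> R) : R := rsum n (fun x => rsum n (F x)).

Lemma dsum_ext n F G :
  (forall x y, (x < n)%nat -> (y < n)%nat -> F x y = G x y) -> dsum n F = dsum n G.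
Proof. intros H. apply rsum_ext. intros. apply rsum_ext. auto. Qed.

Lemma dsum_le n F G :
  (forall x y, (x < n)%nat -> (y < n)%nat -> F x y <= G x y) -> dsum n F <= dsum n G.
Proof. intros H. apply rsum_le. intros. apply rsum_le. auto. Qed.

Lemma dsum_nonneg n F : (forall x y, (x < n)%nat -> (y < n)%nat -> 0 <= F x y) -> 0 <= dsum n F.
Proof. intros H. apply rsum_nonneg. intros. apply rsum_nonneg. auto. Qed.

Lemma dsum_plus n F G : dsum n (fun x y => F x y + G x y) = dsum n F + dsum n G.
Proof. unfold dsum. rewrite <- rsum_plus. apply rsum_ext. intros. apply rsum_plus. Qed.

Lemma dsum_minus n F G : dsum n (fun x y => F x y - G x y) = dsum n F - dsum n G.
Proof. unfold dsum. rewrite <- rsum_minus. apply rsum_ext. intros. apply rsum_minus. Qed.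

Lemma dsum_scal n c F : dsum n (fun x y => c * F x y) = c * dsum n F.
Proof. unfold dsum. rewrite <- rsum_scal. apply rsum_ext. intros. apply rsum_scal. Qed.

Lemma dsum_transpose n F : dsum n F = dsum n (fun x y => F y x).
Proof. apply rsum_swap. Qed.

(** * Hitting probabilities *)

Definition generator n (Q : nat -> nat -> R) (g : nat -> R) x : R :=
  rsum n (fun y => if Nat.eqb y x then 0 else Q x y * (g y - g x)).

Section HittingProbability.

Variables (n : nat) (Q : nat -> nat -> R).
Hypothesis hQ : valid_rates n Q.

Lemma hold_nonneg x : (x < n)%nat -> 0 <= hold n Q x.
Proof.
  intros Hx. apply rsum_nonneg. intros y Hy.
  destruct (Nat.eqb_spec y x); [lra|]. apply hQ; auto.
Qed.

Lemma rates_of_hold_zero x y : (x < n)%nat -> (y < n)%nat -> y <> x ->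
  hold n Q x = 0 -> Q x y = 0.
Proof.
  intros Hx Hy Hyx H0. apply Rle_antisym; [|apply hQ; auto].
  rewrite <- H0. unfold hold.
  pose proof (rsum_term_le n (fun z => if Nat.eqb z x then 0 else Q x z) y) as Ht.
  cbn in Ht. rewrite (proj2 (Nat.eqb_neq _ _) Hyx) in Ht. apply Ht; auto.
  intros z Hz. destruct (Nat.eqb_spec z x); [lra|]. apply hQ; auto.
Qed.

Lemma jump_nonneg x y : (x < n)%nat -> (y < n)%nat -> 0 <= jump n Q x y.
Proof.
  intros Hx Hy. unfold jump. destruct (Nat.eqb_spec y x); [lra|].
  apply Rmult_le_pos; [apply hQ; auto|].
  pose proof (hold_nonneg x Hx).
  destruct (Req_dec (hold n Q x) 0) as [->|E]; [rewrite Rinv_0; lra|].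
  left. apply Rinv_0_lt_compat. lra.
Qed.

Lemma jump_sum_le x : rsum n (jump n Q x) <= 1.
Proof.
  replace (rsum n (jump n Q x)) with (hold n Q x * / hold n Q x).
  - destruct (Req_dec (hold n Q x) 0) as [->|E]; [lra|]. rewrite Rinv_r; lra.
  - unfold hold at 1. rewrite Rmult_comm, <- rsum_scal. apply rsum_ext.
    intros y _. unfold jump. destruct (Nat.eqb y x); unfold Rdiv; ring.
Qed.

(* No positivity of [hold n Q x] is needed: if it vanishes, so do all rates out of [x]. *)
Lemma hold_mul_jump_avg x (g : nat -> R) : (x < n)%nat ->
  hold n Q x * rsum n (fun y => jump n Q x y * g y) =
  rsum n (fun y => if Nat.eqb y x then 0 else Q x y * g y).
Proof.
  intros Hx. destruct (Req_dec (hold n Q x) 0) as [E|E].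
  - rewrite E, Rmult_0_l. transitivity (rsum n (fun _ => 0)); [symmetry; apply rsum_zero|].
    apply rsum_ext. intros y Hy.
    destruct (Nat.eqb_spec y x); [reflexivity|].
    rewrite rates_of_hold_zero; auto. ring.
  - rewrite <- rsum_scal. apply rsum_ext. intros y Hy. unfold jump.
    destruct (Nat.eqb y x); [ring|]. field; auto.
Qed.

Variables A B : nat -> bool.

Lemma hitB_bounds K x : (x < n)%nat -> 0 <= hitB n Q A B K x <= 1.
Proof.
  revert x. induction K as [|K IH]; intros x Hx; simpl.
  - destruct (B x); lra.
  - destruct (B x); [lra|]. destruct (A x); [lra|]. split.
    + apply rsum_nonneg. intros y Hy.
      apply Rmult_le_pos; [apply jump_nonneg|apply IH]; auto.
    + apply Rle_trans with (rsum n (jump n Q x)); [|apply jump_sum_le].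
      apply rsum_le. intros y Hy.
      pose proof (jump_nonneg x y Hx Hy). specialize (IH y Hy). nra.
Qed.

Lemma hitB_mono K x : (x < n)%nat -> hitB n Q A B K x <= hitB n Q A B (S K) x.
Proof.
  revert x. induction K as [|K IH]; intros x Hx;
    cbn [hitB]; destruct (B x); try lra; destruct (A x); try lra.
  - apply rsum_nonneg. intros y Hy.
    apply Rmult_le_pos; [apply jump_nonneg; auto|]. destruct (B y); lra.
  - apply rsum_le. intros y Hy.
    apply Rmult_le_compat_l; [apply jump_nonneg|apply IH]; auto.
Qed.

(* [hitting_prob x] is P_x[H_B < H_A], time 0 included. *)
Definition hitting_prob (x : nat) : R := lim (fun K => hitB n Q A B K x).

Lemma hitting_prob_cv x : (x < n)%nat ->
  Un_cv (fun K => hitB n Q A B K x) (hitting_prob x).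
Proof.
  intros Hx.
  assert (Hg : Un_growing (fun K => hitB n Q A B K x)) by (intros K; apply hitB_mono; auto).
  assert (Hb : has_ub (fun K => hitB n Q A B K x)).
  { exists 1. intros z [K ->]. apply hitB_bounds; auto. }
  destruct (growing_cv _ Hg Hb) as [l Hl].
  unfold hitting_prob. now rewrite (lim_eq _ l Hl).
Qed.

Lemma hitting_prob_bounds x : (x < n)%nat -> 0 <= hitting_prob x <= 1.
Proof.
  intros Hx. pose proof (hitting_prob_cv x Hx) as H. split.
  - eapply Rle_cv_lim; [|apply cv_const|exact H]. intros; apply hitB_bounds; auto.
  - eapply Rle_cv_lim; [|exact H|apply cv_const]. intros; apply hitB_bounds; auto.
Qed.

Lemma hitting_prob_B x : (x < n)%nat -> B x = true -> hitting_prob x = 1.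
Proof.
  intros Hx HB. apply (UL_sequence (fun K => hitB n Q A B K x)); [apply hitting_prob_cv; auto|].
  apply (Un_cv_ext (fun _ => 1)); [|apply cv_const].
  intros [|K]; simpl; now rewrite HB.
Qed.

Lemma hitting_prob_A x : (x < n)%nat -> A x = true -> B x = false -> hitting_prob x = 0.
Proof.
  intros Hx HA HB. apply (UL_sequence (fun K => hitB n Q A B K x)); [apply hitting_prob_cv; auto|].
  apply (Un_cv_ext (fun _ => 0)); [|apply cv_const].
  intros [|K]; simpl; now rewrite HB, ?HA.
Qed.

Lemma jump_avg_hitting_prob_cv x : (x < n)%nat ->
  Un_cv (fun K => rsum n (fun y => jump n Q x y * hitB n Q A B K y))
        (rsum n (fun y => jump n Q x y * hitting_prob y)).
Proof.
  intros Hx. apply rsum_cv. intros y Hy.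
  apply CV_mult; [apply cv_const|apply hitting_prob_cv; auto].
Qed.

Lemma generator_hitting_prob x : (x < n)%nat -> A x = false -> B x = false ->
  generator n Q hitting_prob x = 0.
Proof.
  intros Hx HA HB.
  assert (Hharm : hitting_prob x = rsum n (fun y => jump n Q x y * hitting_prob y)).
  { apply (UL_sequence (fun K => hitB n Q A B (K + 1) x)).
    - apply (CV_shift' (fun K => hitB n Q A B K x) 1). apply hitting_prob_cv; auto.
    - apply (Un_cv_ext (fun K => rsum n (fun y => jump n Q x y * hitB n Q A B K y))).
      + intros K. rewrite Nat.add_1_r. simpl. now rewrite HB, HA.
      + apply jump_avg_hitting_prob_cv; auto. }
  unfold generator.
  rewrite (rsum_ext _ _ (fun y => (if Nat.eqb y x then 0 else Q x y * hitting_prob y)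
                                  - hitting_prob x * (if Nat.eqb y x then 0 else Q x y)))
    by (intros y _; destruct (Nat.eqb y x); ring).
  rewrite rsum_minus, rsum_scal, <- hold_mul_jump_avg, <- Hharm by auto.
  unfold hold. ring.
Qed.

Lemma escape_hitting_prob x : (x < n)%nat ->
  escape n Q A B x = rsum n (fun y => jump n Q x y * hitting_prob y).
Proof. intros Hx. apply lim_eq, jump_avg_hitting_prob_cv; auto. Qed.

End HittingProbability.

(** * Capacity and Dirichlet form *)

Definition flow (Q : nat -> nat -> R) (mu : nat -> R) (x y : nat) : R :=
  if Nat.eqb y x then 0 else mu x * Q x y.

Definition balanced n Q mu : Prop :=
  forall y, (y < n)%nat -> rsum n (fun x => flow Q mu x y) = rsum n (flow Q mu y).

Definition dirichlet n Q mu (h : nat -> R) : R :=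
  / 2 * dsum n (fun x y => flow Q mu x y * (h x - h y) ^ 2).

Lemma flow_nonneg n Q mu x y : valid_rates n Q -> (forall z, (z < n)%nat -> 0 <= mu z) ->
  (x < n)%nat -> (y < n)%nat -> 0 <= flow Q mu x y.
Proof.
  intros hQ hmu Hx Hy. unfold flow. destruct (Nat.eqb_spec y x); [lra|].
  apply Rmult_le_pos; [apply hmu|apply hQ]; auto.
Qed.

Lemma mu_mul_generator n Q mu g x :
  mu x * generator n Q g x = rsum n (fun y => flow Q mu x y * (g y - g x)).
Proof.
  unfold generator. rewrite <- rsum_scal. apply rsum_ext. intros y _. unfold flow.
  destruct (Nat.eqb y x); ring.
Qed.

Section BalancedFlow.

Variables (n : nat) (Q : nat -> nat -> R) (mu : nat -> R).
Hypothesis hbal : balanced n Q mu.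

Lemma balanced_dsum_target (h : nat -> R) :
  dsum n (fun x y => flow Q mu x y * h y) = dsum n (fun x y => flow Q mu x y * h x).
Proof.
  rewrite dsum_transpose. unfold dsum.
  transitivity (rsum n (fun x => h x * rsum n (fun y => flow Q mu y x))).
  - apply rsum_ext. intros x _. rewrite <- rsum_scal. apply rsum_ext. intros; ring.
  - apply rsum_ext. intros x Hx. rewrite hbal, <- rsum_scal by auto.
    apply rsum_ext. intros; ring.
Qed.

Lemma balanced_dsum_grad (h : nat -> R) :
  dsum n (fun x y => flow Q mu x y * (h y - h x)) = 0.
Proof.
  rewrite (dsum_ext _ _ (fun x y => flow Q mu x y * h y - flow Q mu x y * h x))
    by (intros; ring).
  rewrite dsum_minus, balanced_dsum_target. ring.
Qed.

End BalancedFlow.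

Definition up_crossing (a b t : R) : R :=
  if Rlt_dec a t then (if Rle_dec t b then 1 else 0) else 0.

Section Capacity.

Variables (n : nat) (Q : nat -> nat -> R) (mu : nat -> R) (A B : nat -> bool).
Hypothesis hQ : valid_rates n Q.
Hypothesis hdisj : forall x, A x = true -> B x = false.

Let g := hitting_prob n Q A B.

(* [g] is harmonic off [A] and [B], so only the values of [psi] on [A] and [B] matter. *)
Lemma capacity_flux (psi : nat -> R) :
  (forall x, (x < n)%nat -> A x = true -> psi x = 1) ->
  (forall x, (x < n)%nat -> B x = true -> psi x = 0) ->
  capacity n Q mu A B = dsum n (fun x y => flow Q mu x y * (g y - g x) * psi x).
Proof.
  intros HA1 HB0. unfold capacity, dsum. apply rsum_ext. intros x Hx.
  rewrite (rsum_ext _ _ (fun y => psi x * (flow Q mu x y * (g y - g x)))) by (intros; ring).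
  rewrite rsum_scal, <- mu_mul_generator.
  destruct (A x) eqn:HA.
  - rewrite HA1, escape_hitting_prob, Rmult_assoc, hold_mul_jump_avg by auto.
    unfold generator, g. rewrite (hitting_prob_A n Q hQ A B x) by auto.
    rewrite Rmult_1_l. f_equal. apply rsum_ext. intros y _.
    destruct (Nat.eqb y x); ring.
  - destruct (B x) eqn:HB.
    + rewrite HB0 by auto. ring.
    + unfold g. rewrite generator_hitting_prob by auto. ring.
Qed.

Lemma capacity_dirichlet : balanced n Q mu -> capacity n Q mu A B = dirichlet n Q mu g.
Proof.
  intros hbal. rewrite (capacity_flux (fun x => 1 - g x)).
  2:{ intros. unfold g. rewrite hitting_prob_A by auto. ring. }
  2:{ intros. unfold g. rewrite hitting_prob_B by auto. ring. }
  unfold dirichlet.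
  transitivity (dsum n (fun x y => flow Q mu x y * (g y - g x))
                - / 2 * dsum n (fun x y => flow Q mu x y * (g y * g y - g x * g x))
                + / 2 * dsum n (fun x y => flow Q mu x y * (g x - g y) ^ 2)).
  - rewrite <- !dsum_scal, <- dsum_minus, <- dsum_plus. apply dsum_ext. intros. field.
  - rewrite (balanced_dsum_grad _ _ _ hbal g).
    rewrite (balanced_dsum_grad _ _ _ hbal (fun z => g z * g z)). ring.
Qed.

(* With [psi] the indicator of [h < t], balance lets one replace [g y * psi x] by
   [g y * (psi x - psi y)], which is positive only on edges crossing level [t] upward. *)
Lemma capacity_le_cut (h : nat -> R) t :
  balanced n Q mu -> (forall x, (x < n)%nat -> 0 <= mu x) ->
  (forall x, (x < n)%nat -> A x = true -> h x = 0) ->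
  (forall x, (x < n)%nat -> B x = true -> h x = 1) ->
  0 < t <= 1 ->
  capacity n Q mu A B <= dsum n (fun x y => flow Q mu x y * up_crossing (h x) (h y) t).
Proof.
  intros hbal hmu hA hB Ht.
  set (psi := fun x => if Rlt_dec (h x) t then 1 else 0).
  rewrite (capacity_flux psi).
  2:{ intros. unfold psi. rewrite hA by auto. destruct (Rlt_dec 0 t); lra. }
  2:{ intros. unfold psi. rewrite hB by auto. destruct (Rlt_dec 1 t); lra. }
  rewrite (dsum_ext _ _ (fun x y => flow Q mu x y * (g y * psi x)
                                   - flow Q mu x y * (g x * psi x))) by (intros; ring).
  rewrite dsum_minus, <- (balanced_dsum_target _ _ _ hbal (fun z => g z * psi z)), <- dsum_minus.
  apply dsum_le. intros x y Hx Hy.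
  assert (Hf : 0 <= flow Q mu x y) by (apply (flow_nonneg n); auto).
  assert (Hg : 0 <= g y <= 1) by (apply hitting_prob_bounds; auto).
  unfold psi, up_crossing.
  destruct (Rlt_dec (h x) t), (Rlt_dec (h y) t); try destruct (Rle_dec t (h y)); try lra; nra.
Qed.

End Capacity.

Lemma dirichlet_principle n Q mu A B (f : nat -> R) : valid_rates n Q ->
  (forall x y, (x < n)%nat -> (y < n)%nat -> flow Q mu x y = flow Q mu y x) ->
  (forall x y, (x < n)%nat -> (y < n)%nat -> 0 <= flow Q mu x y) ->
  (forall x, A x = true -> B x = false) ->
  (forall x, (x < n)%nat -> A x = true -> f x = 0) ->
  (forall x, (x < n)%nat -> B x = true -> f x = 1) ->
  dirichlet n Q mu (hitting_prob n Q A B) <= dirichlet n Q mu f.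
Proof.
  intros hQ hsym hnn hdisj hA hB.
  set (g := hitting_prob n Q A B). set (u := fun x => f x - g x). set (c := flow Q mu).
  assert (Hcross : dsum n (fun x y => c x y * (g x - g y) * u x) = 0).
  { unfold dsum. rewrite <- (rsum_zero n). apply rsum_ext. intros x Hx.
    rewrite (rsum_ext _ _ (fun y => - u x * (flow Q mu x y * (g y - g x)))) by (intros; unfold c; ring).
    rewrite rsum_scal, <- mu_mul_generator.
    destruct (A x) eqn:HA; [|destruct (B x) eqn:HB].
    - unfold u, g. rewrite hA, hitting_prob_A by auto. ring.
    - unfold u, g. rewrite hB, hitting_prob_B by auto. ring.
    - unfold g. rewrite generator_hitting_prob by auto. ring. }
  assert (Hcross' : dsum n (fun x y => c x y * (g x - g y) * u y)
                    = - dsum n (fun x y => c x y * (g x - g y) * u x)).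
  { rewrite dsum_transpose. transitivity ((-1) * dsum n (fun x y => c x y * (g x - g y) * u x));
      [rewrite <- dsum_scal|ring].
    apply dsum_ext. intros x y Hx Hy. unfold c. rewrite hsym by auto. ring. }
  assert (Hnn : 0 <= dsum n (fun x y => c x y * (u x - u y) ^ 2)).
  { apply dsum_nonneg. intros. apply Rmult_le_pos; [apply hnn; auto|apply pow2_ge_0]. }
  assert (E : dirichlet n Q mu f = dirichlet n Q mu g
              + / 2 * dsum n (fun x y => c x y * (u x - u y) ^ 2)
              + (dsum n (fun x y => c x y * (g x - g y) * u x)
                 - dsum n (fun x y => c x y * (g x - g y) * u y))).
  { unfold dirichlet. rewrite <- !dsum_scal, <- dsum_minus, <- !dsum_plus.
    apply dsum_ext. intros. unfold u, c. field. }
  rewrite E, Hcross', Hcross. lra.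
Qed.

Lemma invariant_balanced n Q mu : invariant_prob n Q mu -> balanced n Q mu.
Proof.
  intros [_ [_ hinv]] y Hy. unfold flow.
  rewrite (rsum_ext _ _ (fun x => if Nat.eqb x y then 0 else mu x * Q x y))
    by (intros; now rewrite Nat.eqb_sym).
  rewrite hinv by auto. unfold hold. rewrite <- rsum_scal. apply rsum_ext. intros.
  destruct (Nat.eqb x y); ring.
Qed.

(* Mass zero at [y] forces mass zero at every [x] with [Q x y > 0], by balance at [y]. *)
Lemma invariant_prob_pos n Q mu : valid_rates n Q -> irreducible n Q -> invariant_prob n Q mu ->
  forall x, (x < n)%nat -> 0 < mu x.
Proof.
  intros hQ hirr hmu. pose proof (invariant_balanced n Q mu hmu) as hbal.
  destruct hmu as [hnn [hsum _]].
  assert (Hstep : forall x y, (x < n)%nat -> (y < n)%nat -> x <> y -> 0 < Q x y ->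
                  mu y = 0 -> mu x = 0).
  { intros x y Hx Hy Hxy HQ Hy0.
    assert (Hout : rsum n (flow Q mu y) = 0).
    { rewrite <- (rsum_zero n). apply rsum_ext. intros z _.
      unfold flow. rewrite Hy0. destruct (Nat.eqb z y); ring. }
    rewrite <- hbal in Hout by auto.
    assert (Hxy' : flow Q mu x y <= 0).
    { rewrite <- Hout. apply (rsum_term_le n (fun z => flow Q mu z y)); auto.
      intros. apply (flow_nonneg n); auto. }
    unfold flow in Hxy'. rewrite (proj2 (Nat.eqb_neq _ _) (not_eq_sym Hxy)) in Hxy'.
    pose proof (hnn x Hx). pose proof (hQ x y Hx Hy Hxy). nra. }
  intros x Hx. destruct (Rle_lt_dec (mu x) 0) as [Hle|]; [exfalso|auto].
  assert (Hall : forall z, (z < n)%nat -> mu z = 0).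
  { intros z Hz. pose proof (hirr z x Hz Hx) as Hpath.
    assert (Hx0 : mu x = 0) by (pose proof (hnn x Hx); lra).
    clear Hz Hx Hle. revert Hx0.
    induction Hpath as [a b (Ha & Hb & Hab & HQ)| |a b c _ IH1 _ IH2]; eauto. }
  rewrite (rsum_ext _ _ (fun _ => 0)), rsum_zero in hsum; auto. lra.
Qed.

Section Reversibilization.

Variables (n : nat) (Q : nat -> nat -> R) (mu : nat -> R).
Hypothesis hpos : forall x, (x < n)%nat -> 0 < mu x.

Lemma flow_sym_rates x y : (x < n)%nat -> (y < n)%nat ->
  flow (sym_rates Q mu) mu x y = (flow Q mu x y + flow Q mu y x) / 2.
Proof.
  intros Hx Hy. unfold flow, sym_rates. rewrite (Nat.eqb_sym x y).
  destruct (Nat.eqb y x); [field|]. pose proof (hpos x Hx). field. lra.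
Qed.

Lemma sym_rates_valid : valid_rates n Q -> valid_rates n (sym_rates Q mu).
Proof.
  intros hQ x y Hx Hy Hxy. unfold sym_rates.
  pose proof (hQ x y Hx Hy Hxy). pose proof (hQ y x Hy Hx (not_eq_sym Hxy)).
  pose proof (hpos x Hx). pose proof (hpos y Hy).
  assert (0 <= mu y * Q y x / mu x) by (apply Rle_mult_inv_pos; nra).
  lra.
Qed.

Lemma sym_rates_balanced : balanced n Q mu -> balanced n (sym_rates Q mu) mu.
Proof.
  intros hbal y Hy.
  rewrite (rsum_ext _ _ (fun x => / 2 * (flow Q mu x y + flow Q mu y x)))
    by (intros; rewrite flow_sym_rates by auto; unfold Rdiv; ring).
  rewrite (rsum_ext _ (flow _ mu y) (fun x => / 2 * (flow Q mu y x + flow Q mu x y)))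
    by (intros; rewrite flow_sym_rates by auto; unfold Rdiv; ring).
  rewrite !rsum_scal, !rsum_plus. ring.
Qed.

Lemma dirichlet_sym_rates h : dirichlet n (sym_rates Q mu) mu h = dirichlet n Q mu h.
Proof.
  unfold dirichlet. f_equal.
  rewrite (dsum_ext _ _ (fun x y => / 2 * (flow Q mu x y * (h x - h y) ^ 2)
                                    + / 2 * (flow Q mu y x * (h y - h x) ^ 2)))
    by (intros; rewrite flow_sym_rates by auto; field).
  rewrite dsum_plus, !dsum_scal, <- (dsum_transpose n (fun x y => flow Q mu x y * (h x - h y) ^ 2)).
  field.
Qed.

End Reversibilization.

(** * Levels of a function *)

Module RLeBool <: TotalLeBool.
  Definition t := R.
  Definition leb (x y : R) : bool := if Rle_dec x y then true else false.
  Infix "<=?" := leb (at level 70, no associativity).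
  Theorem leb_total : forall x y, (x <=? y) = true \/ (y <=? x) = true.
  Proof. intros x y. unfold leb. destruct (Rle_dec x y), (Rle_dec y x); auto. lra. Qed.
End RLeBool.

Module RSort := Sort RLeBool.

Lemma exists_sorted_permutation (l : list R) : exists s, StronglySorted Rle s /\ Permutation l s.
Proof.
  exists (RSort.sort l). split; [|apply RSort.Permuted_sort].
  assert (Hleb : forall x y, is_true (RLeBool.leb x y) <-> x <= y).
  { intros x y. unfold RLeBool.leb, is_true. destruct (Rle_dec x y); split; easy. }
  assert (Htrans : Transitive (fun x y => is_true (RLeBool.leb x y))).
  { intros x y z Hxy Hyz. apply Hleb in Hxy, Hyz. apply Hleb. lra. }
  induction (RSort.StronglySorted_sort l Htrans); constructor; auto.
  eapply Forall_impl; [|eassumption]. intros. now apply Hleb.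
Qed.

Fixpoint sum_adjacent (F : R -> R -> R) (l : list R) : R :=
  match l with
  | a :: ((b :: _) as l') => F a b + sum_adjacent F l'
  | _ => 0
  end.

Lemma sum_adjacent_cons2 F a b l :
  sum_adjacent F (a :: b :: l) = F a b + sum_adjacent F (b :: l).
Proof. reflexivity. Qed.

Lemma sum_adjacent_le F G l : StronglySorted Rle l ->
  (forall p q, In p l -> In q l -> p <= q -> F p q <= G p q) ->
  sum_adjacent F l <= sum_adjacent G l.
Proof.
  induction l as [|a [|b l] IH]; intros Hs H; try (simpl; lra).
  rewrite !sum_adjacent_cons2. apply StronglySorted_inv in Hs as [Hs Ha].
  apply Rplus_le_compat.
  - apply H; simpl; auto. exact (Forall_inv Ha).
  - apply IH; auto. intros p q Hp Hq. apply H; simpl; auto.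
Qed.

Lemma sum_adjacent_zero l : sum_adjacent (fun _ _ => 0) l = 0.
Proof. induction l as [|a [|b l] IH]; try reflexivity. rewrite sum_adjacent_cons2, IH. lra. Qed.

Lemma sum_adjacent_nonneg F l : StronglySorted Rle l ->
  (forall p q, p <= q -> 0 <= F p q) -> 0 <= sum_adjacent F l.
Proof. intros Hs H. rewrite <- (sum_adjacent_zero l). apply sum_adjacent_le; auto. Qed.

Lemma sum_adjacent_scal c F l :
  sum_adjacent (fun p q => c * F p q) l = c * sum_adjacent F l.
Proof.
  induction l as [|a [|b l] IH]; try (simpl; lra). rewrite !sum_adjacent_cons2, IH. lra.
Qed.

Lemma sum_adjacent_dsum n (F : nat -> nat -> R -> R -> R) l :
  dsum n (fun x y => sum_adjacent (F x y) l)
  = sum_adjacent (fun p q => dsum n (fun x y => F x y p q)) l.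
Proof.
  induction l as [|a [|b l] IH].
  1, 2: cbn [sum_adjacent]; unfold dsum;
    rewrite (rsum_ext _ _ (fun _ => 0)) by (intros; apply rsum_zero); apply rsum_zero.
  rewrite sum_adjacent_cons2, <- IH, <- dsum_plus.
  apply dsum_ext. intros. reflexivity.
Qed.

Lemma sum_adjacent_sq_le_length F l :
  (sum_adjacent F l) ^ 2 <= INR (length l) * sum_adjacent (fun p q => F p q ^ 2) l.
Proof.
  induction l as [|a [|b l] IH]; [simpl; lra|simpl; lra|].
  change (length (a :: b :: l)) with (S (length (b :: l))).
  rewrite !sum_adjacent_cons2. rewrite S_INR.
  set (m := INR (length (b :: l))) in *.
  assert (Hm : 1 <= m) by (unfold m; simpl length; rewrite S_INR; pose proof (pos_INR (length l)); lra).
  set (s := sum_adjacent F (b :: l)) in *.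
  set (s2 := sum_adjacent (fun p q => F p q ^ 2) (b :: l)) in *.
  (* Cauchy-Schwarz step: [2 f s <= m f^2 + s^2 / m <= m f^2 + s2]. *)
  pose proof (pow2_ge_0 (m * F a b - s)).
  assert (0 <= m * F a b ^ 2 + s2 - 2 * F a b * s).
  { apply Rmult_le_reg_l with m; nra. }
  nra.
Qed.

Lemma sum_adjacent_sq_le_sq F l : StronglySorted Rle l -> (forall p q, p <= q -> 0 <= F p q) ->
  sum_adjacent (fun p q => F p q ^ 2) l <= (sum_adjacent F l) ^ 2.
Proof.
  induction l as [|a [|b l] IH]; intros Hs H; [simpl; lra|simpl; lra|].
  rewrite !sum_adjacent_cons2.
  pose proof Hs as Hs'. apply StronglySorted_inv in Hs' as [Hs' Ha].
  assert (0 <= F a b) by (apply H, (Forall_inv Ha)).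
  assert (0 <= sum_adjacent F (b :: l)) by (apply sum_adjacent_nonneg; auto).
  specialize (IH Hs' H). nra.
Qed.

Lemma spread_le_sum_adjacent l z w : StronglySorted Rle l -> In z l -> In w l ->
  w - z <= sum_adjacent (fun p q => q - p) l.
Proof.
  revert z w. induction l as [|a [|b l] IH]; intros z w Hs Hz Hw.
  - destruct Hz.
  - destruct Hz as [<-|[]], Hw as [<-|[]]. simpl. lra.
  - apply StronglySorted_inv in Hs as [Hs Ha].
    assert (Hb : a <= b) by exact (Forall_inv Ha).
    assert (Hmin : forall v, In v (b :: l) -> a <= v) by (apply Forall_forall; auto).
    assert (0 <= sum_adjacent (fun p q => q - p) (b :: l)) by (apply sum_adjacent_nonneg; auto; intros; lra).
    rewrite sum_adjacent_cons2.
    destruct Hz as [<-|Hz], Hw as [<-|Hw].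
    + lra.
    + pose proof (IH b w Hs (or_introl eq_refl) Hw). lra.
    + pose proof (Hmin z Hz). lra.
    + pose proof (IH z w Hs Hz Hw). lra.
Qed.

Lemma up_crossing_bounds a b t : 0 <= up_crossing a b t <= 1.
Proof. unfold up_crossing. destruct (Rlt_dec a t); [destruct (Rle_dec t b)|]; lra. Qed.

Lemma up_crossing_above a b t : b < t -> up_crossing a b t = 0.
Proof. intros H. unfold up_crossing. destruct (Rlt_dec a t); [destruct (Rle_dec t b)|]; lra. Qed.

Lemma up_crossing_below a b t : t <= a -> up_crossing a b t = 0.
Proof. intros H. unfold up_crossing. destruct (Rlt_dec a t); lra. Qed.

Lemma crossing_gaps_from a b x l : StronglySorted Rle (x :: l) -> a <= x ->
  sum_adjacent (fun p q => (q - p) * up_crossing a b q) (x :: l) <= Rmax 0 (b - x).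
Proof.
  revert x. induction l as [|y l IH]; intros x Hs Hax; [apply Rmax_l|].
  rewrite sum_adjacent_cons2. pose proof Hs as Hs'.
  apply StronglySorted_inv in Hs' as [Hs' Hx]. pose proof (Forall_inv Hx) as Hxy.
  specialize (IH y Hs' ltac:(lra)).
  pose proof (up_crossing_bounds a b y).
  pose proof (Rmax_l 0 (b - x)). pose proof (Rmax_r 0 (b - x)).
  destruct (Rle_dec y b).
  - rewrite Rmax_right in IH by lra. nra.
  - rewrite Rmax_left in IH by lra. rewrite up_crossing_above by lra. lra.
Qed.

Lemma crossing_gaps_le a b l : StronglySorted Rle l -> In a l -> a <= b ->
  sum_adjacent (fun p q => (q - p) * up_crossing a b q) l <= b - a.
Proof.
  induction l as [|x l IH]; intros Hs Ha Hab; [destruct Ha|].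
  destruct Ha as [->|Ha].
  - pose proof (crossing_gaps_from a b a l Hs (Rle_refl a)). rewrite Rmax_right in H; lra.
  - destruct l as [|y l]; [destruct Ha|].
    apply StronglySorted_inv in Hs as [Hs _]. rewrite sum_adjacent_cons2.
    assert (Hya : y <= a).
    { destruct Ha as [<-|Ha]; [lra|]. apply StronglySorted_inv in Hs as [_ Hy].
      eapply Forall_forall in Hy; eauto. }
    rewrite up_crossing_below by lra. specialize (IH Hs Ha Hab). lra.
Qed.

(* The crossed gaps are nonnegative and add up to at most [b - a]. *)
Lemma crossing_sq_gaps_le a b l : StronglySorted Rle l -> In a l ->
  sum_adjacent (fun p q => (q - p) ^ 2 * up_crossing a b q) l <= (a - b) ^ 2.
Proof.
  intros Hs Ha. destruct (Rle_dec a b) as [Hab|Hab].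
  - set (F := fun p q => (q - p) * up_crossing a b q).
    assert (HF : forall p q, p <= q -> 0 <= F p q).
    { intros p q Hpq. pose proof (up_crossing_bounds a b q). unfold F. nra. }
    apply Rle_trans with (sum_adjacent (fun p q => F p q ^ 2) l).
    { apply sum_adjacent_le; auto. intros p q _ _ _. unfold F, up_crossing.
      destruct (Rlt_dec a q); [destruct (Rle_dec q b)|]; lra. }
    pose proof (sum_adjacent_sq_le_sq F l Hs HF) as Hsq.
    pose proof (sum_adjacent_nonneg F l Hs HF) as Hnn.
    pose proof (crossing_gaps_le a b l Hs Ha Hab) as Hle. fold F in Hle. nra.
  - apply Rle_trans with 0; [|apply pow2_ge_0].
    rewrite <- (sum_adjacent_zero l). apply sum_adjacent_le; auto. intros p q _ _ _.
    destruct (Rlt_dec b q); [rewrite up_crossing_above|rewrite up_crossing_below]; lra.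
Qed.

Lemma sum_sq_gaps_ge_inv_length s : StronglySorted Rle s -> In 0 s -> In 1 s ->
  1 <= INR (length s) * sum_adjacent (fun p q => (q - p) ^ 2) s.
Proof.
  intros Hs H0 H1.
  pose proof (spread_le_sum_adjacent s 0 1 Hs H0 H1) as Hspread.
  pose proof (sum_adjacent_sq_le_length (fun p q => q - p) s) as HCS.
  nra.
Qed.

(* Averaging the cut bound over the levels [t] taken by [h], weighted by the squared gaps
   between consecutive levels. *)
Lemma cut_levels_bound n (W : nat -> nat -> R) (h : nat -> R) K :
  (forall x y, (x < n)%nat -> (y < n)%nat -> 0 <= W x y) ->
  (forall x, (x < n)%nat -> 0 <= h x <= 1) ->
  (exists a, (a < n)%nat /\ h a = 0) -> (exists b, (b < n)%nat /\ h b = 1) ->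
  (forall t, 0 < t <= 1 -> K <= dsum n (fun x y => W x y * up_crossing (h x) (h y) t)) ->
  K <= INR n * dsum n (fun x y => W x y * (h x - h y) ^ 2).
Proof.
  intros HW Hh [a [Ha Ha0]] [b [Hb Hb1]] HK.
  destruct (exists_sorted_permutation (map h (seq 0 n))) as [s [Hs Hperm]].
  assert (Hin : forall z, In z s <-> exists x, (x < n)%nat /\ h x = z).
  { intros z. split.
    - intros Hz. apply (Permutation_in _ (Permutation_sym Hperm)), in_map_iff in Hz.
      destruct Hz as [x [<- Hx]]. apply in_seq in Hx. exists x. split; [lia|auto].
    - intros [x [Hx <-]]. apply (Permutation_in _ Hperm), in_map, in_seq. lia. }
  set (gap2 := sum_adjacent (fun p q => (q - p) ^ 2) s).
  assert (Hgap : 1 <= INR n * gap2).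
  { replace n with (length s) at 1
      by (rewrite <- (Permutation_length Hperm), length_map, length_seq; reflexivity).
    apply sum_sq_gaps_ge_inv_length; auto; apply Hin; eauto. }
  assert (Hlevels : K * gap2 <= dsum n (fun x y => W x y * (h x - h y) ^ 2)).
  { unfold gap2. rewrite <- sum_adjacent_scal.
    apply Rle_trans with (sum_adjacent (fun p q =>
      dsum n (fun x y => W x y * ((q - p) ^ 2 * up_crossing (h x) (h y) q))) s).
    - apply sum_adjacent_le; auto. intros p q Hp Hq Hpq.
      rewrite (dsum_ext _ _ (fun x y => (q - p) ^ 2 * (W x y * up_crossing (h x) (h y) q)))
        by (intros; ring).
      rewrite dsum_scal.
      destruct (Req_dec p q) as [->|Hne]; [rewrite Rminus_diag; simpl; lra|].
      apply Hin in Hp as [x [Hx <-]]. apply Hin in Hq as [y [Hy <-]].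
      pose proof (Hh x Hx). pose proof (Hh y Hy).
      pose proof (HK (h y) ltac:(lra)). pose proof (pow2_ge_0 (h y - h x)). nra.
    - rewrite <- sum_adjacent_dsum. apply dsum_le. intros x y Hx Hy.
      rewrite sum_adjacent_scal. apply Rmult_le_compat_l; auto.
      apply crossing_sq_gaps_le; auto. apply Hin; eauto. }
  assert (HD : 0 <= dsum n (fun x y => W x y * (h x - h y) ^ 2)).
  { apply dsum_nonneg. intros. apply Rmult_le_pos; auto. apply pow2_ge_0. }
  pose proof (pos_INR n) as HN.
  destruct (Rle_dec K 0); [pose proof (Rmult_le_pos _ _ HN HD); lra|].
  assert (K * 1 <= K * (INR n * gap2)) by (apply Rmult_le_compat_l; lra).
  assert (INR n * (K * gap2) <= INR n * dsum n (fun x y => W x y * (h x - h y) ^ 2))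
    by (apply Rmult_le_compat_l; lra).
  lra.
Qed.

Theorem corollary4p6 (n : nat) (Q : nat -> nat -> R) (mu : nat -> R)
  (A B : nat -> bool)
  (hQ : valid_rates n Q) (hirr : irreducible n Q) (hmu : invariant_prob n Q mu)
  (hAE : forall x, A x = true -> (x < n)%nat)
  (hBE : forall x, B x = true -> (x < n)%nat)
  (hdisj : forall x, A x = true -> B x = false)
  (hAne : exists x, A x = true) (hBne : exists x, B x = true) :
  capacity n (sym_rates Q mu) mu A B <= capacity n Q mu A B /\
  capacity n Q mu A B <= 2 * INR n * capacity n (sym_rates Q mu) mu A B.
Proof.
  pose proof (invariant_prob_pos n Q mu hQ hirr hmu) as hpos.
  assert (hmu0 : forall x, (x < n)%nat -> 0 <= mu x) by (intros; left; auto).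
  pose proof (invariant_balanced n Q mu hmu) as hbal.
  assert (hQs : valid_rates n (sym_rates Q mu)) by (apply sym_rates_valid; auto).
  assert (hbals : balanced n (sym_rates Q mu) mu) by (apply sym_rates_balanced; auto).
  rewrite (capacity_dirichlet n (sym_rates Q mu) mu A B) by auto.
  split.
  - rewrite (capacity_dirichlet n Q mu A B) by auto.
    rewrite <- (dirichlet_sym_rates n Q mu hpos (hitting_prob n Q A B)).
    apply dirichlet_principle; auto.
    + intros x y Hx Hy. rewrite !(flow_sym_rates n) by auto. field.
    + intros. apply (flow_nonneg n); auto.
    + intros. apply hitting_prob_A; auto.
    + intros. apply hitting_prob_B; auto.
  - rewrite dirichlet_sym_rates by auto. unfold dirichlet.
    assert (Hhalf : forall D, 2 * INR n * (/ 2 * D) = INR n * D) by (intros; field).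
    rewrite Hhalf.
    apply cut_levels_bound.
    + intros. apply (flow_nonneg n); auto.
    + intros. apply hitting_prob_bounds; auto.
    + destruct hAne as [a Ha]. exists a. split; auto. apply hitting_prob_A; auto.
    + destruct hBne as [b Hb]. exists b. split; auto. apply hitting_prob_B; auto.
    + intros t Ht. apply capacity_le_cut; auto.
      * intros. apply hitting_prob_A; auto.
      * intros. apply hitting_prob_B; auto.
Qed.
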